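(* Let $\mathcal X\subset\mathbb{R}$ be nonempty, compact and convex with $\mathcal X\subseteq[0,\infty)$, let $X^a,X^b\in\mathbb{R}^{3\times n}$, $t^a,t^b\in\mathbb{R}^3$, $\epsilon_r>0$, and define the cable-driven control term $b(\theta,u)=u\sqrt{\|(X^a\theta+t^a)-(X^b\theta+t^b)\|^2+\epsilon_r}$ for $\theta\in\mathbb{R}^n$, $u\in\mathcal X$. Then for every $u\in\mathcal X$, $b(\cdot,u)$ is twice differentiable with locally Lipschitz second derivatives and is $L$-curvature bounded for a constant $L$ independent of $u\in\mathcal X$, and $\|\partial^2b/\partial\theta\partial u\|$ is uniformly bounded over $\theta\in\mathbb{R}^n$, $u\in\mathcal X$.
   Context: A function $\phi$ is $L$-curvature bounded if $\phi(x)+\frac L2\|x\|^2$ is convex and $\nabla\phi$ is $L$-Lipschitz. *)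

From HB Require Import structures.
From mathcomp Require Import all_boot all_order all_algebra.
From mathcomp Require Import all_classical all_reals all_analysis.
Set Implicit Arguments. Unset Strict Implicit. Unset Printing Implicit Defensive.
Import Order.TTheory GRing.Theory Num.Theory.
Import numFieldNormedType.Exports.
Local Open Scope classical_set_scope.
Local Open Scope ring_scope.

(* Euclidean norm on column vectors R^m (the library norm on matrices is the
   max-norm, so we define the Euclidean one explicitly). *)
Definition eucl_norm (R : realType) (m : nat) (v : 'cV[R]_m) : R :=
  Num.sqrt (\sum_(i < m) v i 0 ^+ 2).

Definition grad (R : realType) (n : nat) (f : 'cV[R]_n -> R^o) (x : 'cV[R]_n)
  : 'cV[R]_n := \col_i ('d f x (delta_mx i 0)).

Definition hess (R : realType) (n : nat) (f : 'cV[R]_n -> R^o) (x : 'cV[R]_n)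
  : 'M[R]_n := \matrix_(i, j) ('d (grad f) x (delta_mx j 0)) i 0.

Definition twice_differentiable (R : realType) (n : nat) (f : 'cV[R]_n -> R^o) :=
  (forall x, differentiable f x) /\ (forall x, differentiable (grad f) x).

Definition hess_locally_lipschitz (R : realType) (n : nat) (f : 'cV[R]_n -> R^o) :=
  forall x : 'cV[R]_n, exists r : R, 0 < r /\ exists K : R,
    forall y z : 'cV[R]_n, `|y - x| < r -> `|z - x| < r ->
      `|hess f y - hess f z| <= K * `|y - z|.

Definition convex_fun (R : realType) (n : nat) (f : 'cV[R]_n -> R) :=
  forall (x y : 'cV[R]_n) (t : R), 0 <= t -> t <= 1 ->
    f (t *: x + (1 - t) *: y) <= t * f x + (1 - t) * f y.

Definition curvature_bounded (R : realType) (n : nat) (L : R)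
    (phi : 'cV[R]_n -> R^o) :=
  convex_fun (fun x => phi x + L / 2 * eucl_norm x ^+ 2) /\
  forall x y : 'cV[R]_n,
    eucl_norm (grad phi x - grad phi y) <= L * eucl_norm (x - y).

Definition convex_subset (R : realType) (X : set R) :=
  forall x y t, X x -> X y -> 0 <= t -> t <= 1 -> X (t * x + (1 - t) * y).

Definition cable_b (R : realType) (n : nat) (Xa Xb : 'M[R]_(3, n)) (ta tb : 'cV[R]_3)
    (eps : R) (th : 'cV[R]_n) (u : R) : R :=
  u * Num.sqrt (eucl_norm ((Xa *m th + ta) - (Xb *m th + tb)) ^+ 2 + eps).

From HB Require Import structures.
From mathcomp Require Import all_boot all_order all_algebra.
From mathcomp Require Import all_classical all_reals all_analysis.
From mathcomp Require Import ring lra.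
Set Implicit Arguments. Unset Strict Implicit. Unset Printing Implicit Defensive.
Import Order.TTheory GRing.Theory Num.Theory.
Import numFieldNormedType.Exports.
Local Open Scope classical_set_scope.
Local Open Scope ring_scope.

(* Write b(th, u) = u S(th) with S(th) = sqrt(|A th + c|^2 + eps), A = Xa - Xb, c = ta - tb,
   and w = A th + c.  S is convex, being the Euclidean norm of th |-> (A th + c, sqrt eps).
   Its gradient is A^T w / S and its Hessian is A^T A / S - (A^T w)(A^T w)^T / S^3.  Since
   |w_k| <= S and S >= sqrt eps, the functions w_k / S and 1 / S are bounded and globally
   Lipschitz, and bounded Lipschitz functions are closed under sums and products; hence the
   gradient and the Hessian of b(., u) are globally Lipschitz with constants proportional to u,
   which is bounded on the compact set X.  The mixed derivative d/du grad b = A^T w / S is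
   bounded for the same reason. *)

Section RealInequalities.
Variable R : realFieldType.

Lemma cauchy_schwarz_cons (a b c x y : R) : 0 <= a -> 0 <= b -> c ^+ 2 <= a * b ->
  (c + x * y) ^+ 2 <= (a + x ^+ 2) * (b + y ^+ 2).
Proof.
move=> a0 b0 cab.
have mixed_ge0 : 0 <= a * y ^+ 2 + b * x ^+ 2 by rewrite addr_ge0 // mulr_ge0 // sqr_ge0.
have mixed_sqr : (2 * c * x * y) ^+ 2 <= (a * y ^+ 2 + b * x ^+ 2) ^+ 2.
  have : 0 <= (a * y ^+ 2 - b * x ^+ 2) ^+ 2 by rewrite sqr_ge0.
  have : 0 <= (x * y) ^+ 2 * (a * b - c ^+ 2) by rewrite mulr_ge0 ?sqr_ge0 // subr_ge0.
  nra.
have mixed : `|2 * c * x * y| <= a * y ^+ 2 + b * x ^+ 2.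
  by rewrite -ler_sqr ?nnegrE ?normr_ge0 // real_normK ?num_real.
have := le_trans (ler_norm _) mixed; nra.
Qed.

Lemma cauchy_schwarz m (f g : 'I_m -> R) :
  (\sum_i f i * g i) ^+ 2 <= (\sum_i f i ^+ 2) * (\sum_i g i ^+ 2).
Proof.
elim: m f g => [|m IH] f g; first by rewrite !big_ord0 mul0r expr0n.
rewrite !big_ord_recr /=; apply: cauchy_schwarz_cons; last exact: IH.
  by apply: sumr_ge0 => i _; rewrite sqr_ge0.
by apply: sumr_ge0 => i _; rewrite sqr_ge0.
Qed.

Lemma sum_sqr_le_sqr_sum m (f : 'I_m -> R) : (forall i, 0 <= f i) ->
  \sum_i f i ^+ 2 <= (\sum_i f i) ^+ 2.
Proof.
elim: m f => [|m IH] f f_ge0; first by rewrite !big_ord0 expr0n.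
rewrite !big_ord_recr /=.
have := IH (fun i => f (widen_ord (leqnSn m) i)) (fun i => f_ge0 _).
have : 0 <= \sum_(i < m) f (widen_ord (leqnSn m) i) by apply: sumr_ge0.
have := f_ge0 ord_max; nra.
Qed.

Lemma norm_div_le (x p b s : R) : 0 < s -> s <= p -> `|x| <= b -> `|x / p| <= b / s.
Proof.
move=> s_gt0 sp xb; have p_gt0 := lt_le_trans s_gt0 sp.
rewrite normrM normfV (gtr0_norm p_gt0) ler_pM //; first by rewrite invr_ge0 ltW.
by rewrite lef_pV2 // posrE.
Qed.

End RealInequalities.

Section EuclideanNorm.
Variable R : realType.

Lemma eucl_norm_sqr m (v : 'cV[R]_m) : eucl_norm v ^+ 2 = \sum_i v i 0 ^+ 2.
Proof. by rewrite sqr_sqrtr // sumr_ge0 // => i _; rewrite sqr_ge0. Qed.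

Lemma eucl_norm_le_sum m (v : 'cV[R]_m) : eucl_norm v <= \sum_i `|v i 0|.
Proof.
rewrite /eucl_norm -(ger0_norm (sumr_ge0 _ (fun i _ => normr_ge0 (v i 0)))).
rewrite -sqrtr_sqr ler_wsqrtr //.
apply: le_trans (sum_sqr_le_sqr_sum (fun i => normr_ge0 (v i 0))).
by apply: ler_sum => i _; rewrite real_normK // num_real.
Qed.

Lemma eucl_norm_le_entries m (v : 'cV[R]_m) (b : R) :
  (forall i, `|v i 0| <= b) -> eucl_norm v <= m%:R * b.
Proof.
move=> vb; apply: le_trans (eucl_norm_le_sum v) _.
apply: le_trans (ler_sum _ (fun i _ => vb i)) _.
by rewrite sumr_const card_ord mulr_natl.
Qed.

Lemma entry_le_eucl_norm m (v : 'cV[R]_m) i : `|v i 0| <= eucl_norm v.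
Proof.
rewrite /eucl_norm -sqrtr_sqr ler_wsqrtr // (bigD1 i) //= lerDl.
by apply: sumr_ge0 => j _; rewrite sqr_ge0.
Qed.

Lemma entry_le_mx_norm p q (M : 'M[R]_(p, q)) i j : `|M i j| <= `|M|.
Proof. by rewrite [leRHS]/Num.Def.normr/= mx_normrE (le_bigmax _ _ (i, j)). Qed.

Lemma entry_dist_le_mx_norm p q (M N : 'M[R]_(p, q)) i j : `|M i j - N i j| <= `|M - N|.
Proof. by have := entry_le_mx_norm (M - N) i j; rewrite !mxE. Qed.

Lemma mx_norm_le p q (M : 'M[R]_(p, q)) (b : R) : 0 <= b ->
  (forall i j, `|M i j| <= b) -> `|M| <= b.
Proof.
move=> b0 Mb; rewrite [leLHS]/Num.Def.normr/= mx_normrE.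
by apply: bigmax_le => // -[i j] _; exact: Mb.
Qed.

Lemma mx_norm_le_eucl_norm m (v : 'cV[R]_m) : `|v| <= eucl_norm v.
Proof.
apply: mx_norm_le => [|i j]; first exact: sqrtr_ge0.
by rewrite (ord1 j); exact: entry_le_eucl_norm.
Qed.

End EuclideanNorm.

Section BoundedLipschitz.
Variables (R : numFieldType) (V : normedModType R).

Definition bounded_lipschitz (f : V -> R) (B K : R) :=
  (forall x, `|f x| <= B) /\ (forall x y, `|f x - f y| <= K * `|x - y|).

Lemma bounded_lipschitz_bound_ge0 f B K : bounded_lipschitz f B K -> 0 <= B.
Proof. by case=> fB _; exact: le_trans (normr_ge0 _) (fB 0). Qed.

Lemma bounded_lipschitz_le f B K B' K' : bounded_lipschitz f B K ->
  B <= B' -> K <= K' -> bounded_lipschitz f B' K'.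
Proof.
move=> [fB fK] BB' KK'; split=> [x|x y]; first exact: le_trans (fB x) BB'.
by apply: le_trans (fK x y) _; rewrite ler_wpM2r.
Qed.

Lemma bounded_lipschitz_cst (k : R) : bounded_lipschitz (fun=> k) `|k| 0.
Proof. by split=> // x y; rewrite subrr normr0 mul0r. Qed.

Lemma bounded_lipschitz_mul f g Bf Kf Bg Kg :
  bounded_lipschitz f Bf Kf -> bounded_lipschitz g Bg Kg ->
  bounded_lipschitz (fun x => f x * g x) (Bf * Bg) (Bf * Kg + Bg * Kf).
Proof.
move=> fBK gBK; have Bf0 := bounded_lipschitz_bound_ge0 fBK.
have Bg0 := bounded_lipschitz_bound_ge0 gBK.
case: fBK gBK => fB fK [gB gK]; split=> [x|x y]; first by rewrite normrM ler_pM.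
have -> : f x * g x - f y * g y = f x * (g x - g y) + g y * (f x - f y) by ring.
apply: le_trans (ler_normD _ _) _; rewrite !normrM mulrDl -!mulrA.
by apply: lerD; apply: ler_pM.
Qed.

Lemma bounded_lipschitz_add f g Bf Kf Bg Kg :
  bounded_lipschitz f Bf Kf -> bounded_lipschitz g Bg Kg ->
  bounded_lipschitz (fun x => f x + g x) (Bf + Bg) (Kf + Kg).
Proof.
case=> fB fK [gB gK]; split=> [x|x y].
  by apply: le_trans (ler_normD _ _) _; apply: lerD.
rewrite opprD addrACA mulrDl.
by apply: le_trans (ler_normD _ _) _; apply: lerD.
Qed.

Lemma bounded_lipschitz_opp f B K :
  bounded_lipschitz f B K -> bounded_lipschitz (fun x => - f x) B K.
Proof. by case=> fB fK; split=> [x|x y]; rewrite ?normrN // -opprD normrN. Qed.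

Lemma bounded_lipschitz_sum p (F : 'I_p -> V -> R) (B K : 'I_p -> R) :
  (forall k, bounded_lipschitz (F k) (B k) (K k)) ->
  bounded_lipschitz (fun x => \sum_k F k x) (\sum_k B k) (\sum_k K k).
Proof.
elim: p F B K => [|p IH] F B K FBK.
  have -> : (fun x => \sum_(k < 0) F k x) = fun=> 0.
    by apply/funext => x; rewrite big_ord0.
  by rewrite !big_ord0; apply: (bounded_lipschitz_le (bounded_lipschitz_cst 0)); rewrite ?normr0.
have -> : (fun x => \sum_(k < p.+1) F k x) =
    fun x => \sum_(k < p) F (widen_ord (leqnSn p) k) x + F ord_max x.
  by apply/funext => x; rewrite big_ord_recr.
by rewrite !big_ord_recr; apply: bounded_lipschitz_add => //; exact: IH.
Qed.

End BoundedLipschitz.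
Arguments bounded_lipschitz_cst {R V}.

Section PointwiseDerivatives.
Variables (R : realType) (V : normedModType R).

Lemma is_derive_sumf p (F : 'I_p -> V -> R^o) x v (dF : 'I_p -> R^o) :
  (forall i, is_derive x v (F i) (dF i)) ->
  is_derive x v (fun t => \sum_i F i t) (\sum_i dF i).
Proof.
by move=> FdF; rewrite -fct_sumE; exact: is_derive_sum.
Qed.

Lemma differentiable_sumf p (F : 'I_p -> V -> R^o) x :
  (forall i, differentiable (F i) x) -> differentiable (fun t => \sum_i F i t) x.
Proof.
by move=> dF; rewrite -fct_sumE; exact: differentiable_sum.
Qed.

Lemma is_derive_inv (f : V -> R^o) x v (df : R^o) : f x != 0 -> is_derive x v f df ->
  is_derive x v (fun t => (f t)^-1) (- (f x) ^- 2 * df).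
Proof.
move=> fx0 fdf; apply: DeriveDef; first exact: derivableV.
by rewrite deriveV // derive_val.
Qed.

Lemma differentiable_sqrt (f : V -> R^o) x : differentiable f x -> 0 < f x ->
  differentiable (fun t => Num.sqrt (f t)) x.
Proof.
move=> df fx_gt0; apply: (differentiable_comp df).
by apply/derivable1_diffP; apply: ex_derive; exact: is_derive1_sqrt.
Qed.

Lemma is_derive_sqrt (f : V -> R^o) x v (df : R^o) : differentiable f x -> 0 < f x ->
  is_derive x v f df ->
  is_derive x v (fun t => Num.sqrt (f t)) (df / (2 * Num.sqrt (f x))).
Proof.
move=> Df fx_gt0 fdf; have Dsqrtf := differentiable_sqrt Df fx_gt0.
apply: DeriveDef; first exact: diff_derivable.
rewrite deriveE // (diff_comp Df); last first.
  by apply/derivable1_diffP; apply: ex_derive; exact: is_derive1_sqrt.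
rewrite /= deriv1E; last by apply: ex_derive; exact: is_derive1_sqrt.
rewrite derive1E derive_sqrt // -deriveE // derive_val.
by rewrite /GRing.scale /= mulrC.
Qed.

End PointwiseDerivatives.

Section MatrixDerivatives.
Variable R : realType.

Lemma is_derive_entry p q (x v : 'M[R]_(p, q)) i j :
  is_derive x v (fun t : 'M[R]_(p, q) => (t i j : R^o)) (v i j).
Proof.
have id_derivable : derivable (id : 'M[R]_(p, q) -> _) x v by exact: derivable_id.
have := derive_mx id_derivable; rewrite derive_id => vE.
apply: DeriveDef; first exact/diff_derivable/differentiable_coord.
by rewrite {2}vE mxE.
Qed.

Lemma differentiable_col (V : normedModType R) p (F : 'I_p -> V -> R^o) x :
  (forall i, differentiable (F i) x) ->
  differentiable (fun t => \col_i F i t : 'cV[R]_p) x.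
Proof.
move=> dF.
have -> : (fun t => \col_i F i t : 'cV[R]_p) =
    \sum_i (fun t => F i t *: (delta_mx i 0 : 'cV[R]_p)).
  apply/funext => t; rewrite fct_sumE [LHS]matrix_sum_delta.
  by apply: eq_bigr => i _; rewrite big_ord1 mxE.
by apply: differentiable_sum => i; exact: differentiableZl.
Qed.

End MatrixDerivatives.

Section RegularizedNorm.
Variables (R : realType) (m n : nat) (A : 'M[R]_(m, n)) (c : 'cV[R]_m) (e : R).
Hypothesis e_gt0 : 0 < e.
Local Notation V := 'cV[R]_n.

Definition aff (t : V) (k : 'I_m) : R := \sum_j A k j * t j 0 + c k 0.
Definition rnorm2 (t : V) : R := \sum_k aff t k ^+ 2 + e.
Definition rnorm (t : V) : R := Num.sqrt (rnorm2 t).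
Definition tr_aff (t : V) (i : 'I_n) : R := \sum_k A k i * aff t k.
Definition gram (i j : 'I_n) : R := \sum_k A k i * A k j.
Definition row_abs_sum (k : 'I_m) : R := \sum_j `|A k j|.
Definition abs_sum : R := \sum_k row_abs_sum k.

Lemma rnorm2_gt0 t : 0 < rnorm2 t.
Proof. by rewrite ltr_wpDl // sumr_ge0 // => k _; rewrite sqr_ge0. Qed.

Lemma rnorm_gt0 t : 0 < rnorm t.
Proof. by rewrite sqrtr_gt0 rnorm2_gt0. Qed.

Lemma rnorm_neq0 t : rnorm t != 0.
Proof. by rewrite gt_eqF // rnorm_gt0. Qed.

Lemma rnorm_sqr t : rnorm t ^+ 2 = rnorm2 t.
Proof. by rewrite sqr_sqrtr // ltW // rnorm2_gt0. Qed.

Lemma sqrt_le_rnorm t : Num.sqrt e <= rnorm t.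
Proof. by rewrite ler_wsqrtr // lerDr sumr_ge0 // => k _; rewrite sqr_ge0. Qed.

Lemma sqrt_e_gt0 : 0 < Num.sqrt e.
Proof. by rewrite sqrtr_gt0. Qed.

Lemma abs_aff_le_rnorm t k : `|aff t k| <= rnorm t.
Proof.
rewrite -sqrtr_sqr ler_wsqrtr // /rnorm2 (bigD1 k) //= -addrA lerDl.
by rewrite addr_ge0 ?(ltW e_gt0) // sumr_ge0 // => j _; rewrite sqr_ge0.
Qed.

Lemma sum_mul_delta k i : \sum_j A k j * (delta_mx i 0 : V) j 0 = A k i.
Proof.
rewrite (bigD1 i) //= big1 ?addr0 => [|j ji]; first by rewrite !mxE !eqxx mulr1.
by rewrite mxE (negbTE ji) mulr0.
Qed.

Lemma differentiable_aff x k : differentiable (fun t => (aff t k : R^o)) x.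
Proof.
apply: (differentiableD _ (differentiable_cst _ _)).
apply: differentiable_sumf => j.
exact: (differentiableM (differentiable_cst _ _) (differentiable_coord _ _ _)).
Qed.

Lemma is_derive_aff x v k :
  is_derive x v (fun t => (aff t k : R^o)) (\sum_j A k j * v j 0).
Proof.
apply: is_derive_eq.
  apply: (is_deriveD _ (is_derive_cst _ _ _)); apply: is_derive_sumf => j.
  exact: (is_deriveM (is_derive_cst _ _ _) (is_derive_entry _ _ _ _)).
by rewrite addr0; apply: eq_bigr => j _; rewrite scaler0 addr0.
Qed.

Lemma differentiable_rnorm2 x : differentiable (fun t => (rnorm2 t : R^o)) x.
Proof.
apply: (differentiableD _ (differentiable_cst _ _)); apply: differentiable_sumf => k.
exact: (differentiableM (differentiable_aff _ _) (differentiable_aff _ _)).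
Qed.

Lemma differentiable_rnorm x : differentiable (fun t => (rnorm t : R^o)) x.
Proof. exact: differentiable_sqrt (differentiable_rnorm2 x) (rnorm2_gt0 x). Qed.

Lemma is_derive_rnorm x v : is_derive x v (fun t => (rnorm t : R^o))
  ((\sum_k aff x k * (\sum_j A k j * v j 0)) / rnorm x).
Proof.
have d_rnorm2 : is_derive x v (fun t => (rnorm2 t : R^o))
    (\sum_k 2 * (aff x k * (\sum_j A k j * v j 0))).
  apply: is_derive_eq.
    apply: (is_deriveD _ (is_derive_cst _ _ _)); apply: is_derive_sumf => k.
    exact: (is_deriveM (is_derive_aff _ _ _) (is_derive_aff _ _ _)).
  by rewrite addr0; apply: eq_bigr => k _; rewrite /GRing.scale /=; ring.
apply: is_derive_eq; first exact: is_derive_sqrt (differentiable_rnorm2 x) (rnorm2_gt0 x) d_rnorm2.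
rewrite -mulr_sumr -/(rnorm x); field; exact: rnorm_neq0.
Qed.

Lemma differentiable_tr_aff x i : differentiable (fun t => (tr_aff t i : R^o)) x.
Proof.
apply: differentiable_sumf => k.
exact: (differentiableM (differentiable_cst _ _) (differentiable_aff _ _)).
Qed.

Lemma is_derive_tr_aff x v i : is_derive x v (fun t => (tr_aff t i : R^o))
   (\sum_k A k i * (\sum_j A k j * v j 0)).
Proof.
apply: is_derive_eq.
  apply: is_derive_sumf => k.
  exact: (is_deriveM (is_derive_cst _ _ _) (is_derive_aff _ _ _)).
by apply: eq_bigr => k _; rewrite scaler0 addr0.
Qed.

Definition rnorm_grad (t : V) : V := \col_i (tr_aff t i / rnorm t).

Lemma grad_scaled_rnorm u : grad (fun t => (u * rnorm t : R^o)) = fun t => u *: rnorm_grad t.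
Proof.
have d_scaled x : differentiable (fun t => (u * rnorm t : R^o)) x.
  exact: (differentiableM (differentiable_cst _ _) (differentiable_rnorm _)).
apply/funext => x; apply/matrixP => i j; rewrite !mxE -deriveE //.
rewrite (derive_val (is_derive := is_deriveM (is_derive_cst _ _ _) (is_derive_rnorm _ _))).
rewrite scaler0 addr0 /GRing.scale /=; congr (_ * (_ / _)).
by apply: eq_bigr => k _; rewrite sum_mul_delta mulrC.
Qed.

Lemma differentiable_rnorm_grad x : differentiable rnorm_grad x.
Proof.
apply: differentiable_col => i; apply: differentiableM (differentiable_tr_aff _ _) _.
exact: differentiableV (differentiable_rnorm _) (rnorm_neq0 _).
Qed.

Lemma hess_scaled_rnorm u y : hess (fun t => (u * rnorm t : R^o)) y = \matrix_(i, j)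
  (u * (gram i j * (rnorm y)^-1 - tr_aff y i / rnorm y * (tr_aff y j / rnorm y) * (rnorm y)^-1)).
Proof.
apply/matrixP => i j; rewrite [RHS]mxE.
have d_grad x : differentiable (fun t => u *: rnorm_grad t) x.
  exact: differentiableZ (differentiable_rnorm_grad x).
rewrite /hess mxE grad_scaled_rnorm -deriveE // derive_mx ?mxE; last exact/diff_derivable.
rewrite (_ : (fun t => _) = fun t => (u * tr_aff t i * (rnorm t)^-1 : R^o)); last first.
  by apply/funext => t; rewrite !mxE mulrA.
rewrite (derive_val (is_derive := is_deriveM
  (is_deriveM (is_derive_cst u _ _) (is_derive_tr_aff _ _ _))
  (is_derive_inv (rnorm_neq0 _) (is_derive_rnorm _ _)))).
rewrite scaler0 addr0 /GRing.scale /=.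
have -> : \sum_k aff y k * (\sum_l A k l * (delta_mx j 0 : V) l 0) = tr_aff y j.
  by apply: eq_bigr => k _; rewrite sum_mul_delta mulrC.
have -> : \sum_k A k i * (\sum_l A k l * (delta_mx j 0 : V) l 0) = gram i j.
  by apply: eq_bigr => k _; rewrite sum_mul_delta.
have -> : (cst u * tr_aff^~ i) y = u * tr_aff y i by [].
field; exact: rnorm_neq0.
Qed.

Lemma abs_entry_le_row_abs_sum k j : `|A k j| <= row_abs_sum k.
Proof. by rewrite /row_abs_sum (bigD1 j) //= lerDl sumr_ge0. Qed.

Lemma row_abs_sum_le k : row_abs_sum k <= abs_sum.
Proof. by rewrite /abs_sum (bigD1 k) //= lerDl sumr_ge0 // => l _; exact: sumr_ge0. Qed.

Lemma col_abs_sum_le i : \sum_k `|A k i| <= abs_sum.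
Proof. by apply: ler_sum => k _; exact: abs_entry_le_row_abs_sum. Qed.

Lemma abs_sum_ge0 : 0 <= abs_sum.
Proof. by apply: sumr_ge0 => k _; exact: sumr_ge0. Qed.

Lemma gram_le i j : `|gram i j| <= abs_sum * abs_sum.
Proof.
apply: le_trans (ler_norm_sum _ _ _) _; rewrite mulr_suml.
apply: ler_sum => k _; rewrite normrM ler_pM ?abs_entry_le_row_abs_sum //.
exact: le_trans (abs_entry_le_row_abs_sum k j) (row_abs_sum_le k).
Qed.

Lemma aff_lipschitz y z k : `|aff y k - aff z k| <= row_abs_sum k * `|y - z|.
Proof.
have -> : aff y k - aff z k = \sum_j A k j * (y j 0 - z j 0).
  rewrite /aff opprD addrACA subrr addr0 -sumrB.
  by apply: eq_bigr => j _; rewrite mulrBr.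
apply: le_trans (ler_norm_sum _ _ _) _; rewrite /row_abs_sum mulr_suml.
by apply: ler_sum => j _; rewrite normrM ler_wpM2l // entry_dist_le_mx_norm.
Qed.

Lemma rnorm_lipschitz y z : `|rnorm y - rnorm z| <= abs_sum * `|y - z|.
Proof.
have sum_gt0 : 0 < rnorm y + rnorm z by rewrite addr_gt0 // rnorm_gt0.
rewrite -(ler_pM2r sum_gt0).
have -> : `|rnorm y - rnorm z| * (rnorm y + rnorm z) =
    `|\sum_k (aff y k - aff z k) * (aff y k + aff z k)|.
  rewrite -(gtr0_norm sum_gt0) -normrM -subr_sqr !rnorm_sqr.
  rewrite /rnorm2 opprD addrACA subrr addr0 -sumrB.
  by congr `|_|; apply: eq_bigr => k _; rewrite subr_sqr.
apply: le_trans (ler_norm_sum _ _ _) _; rewrite /abs_sum !mulr_suml.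
apply: ler_sum => k _; rewrite normrM ler_pM ?aff_lipschitz //.
by apply: le_trans (ler_normD _ _) _; rewrite lerD ?abs_aff_le_rnorm.
Qed.

Lemma bounded_lipschitz_inv_rnorm :
  bounded_lipschitz (fun t : V => (rnorm t)^-1) (Num.sqrt e)^-1 (abs_sum / e).
Proof.
split=> [t|y z].
  rewrite -[_^-1]mul1r -[(Num.sqrt e)^-1]mul1r norm_div_le ?normr1 //.
    exact: sqrt_e_gt0.
  exact: sqrt_le_rnorm.
have -> : (rnorm y)^-1 - (rnorm z)^-1 = (rnorm z - rnorm y) / (rnorm y * rnorm z).
  by field; rewrite !rnorm_neq0.
rewrite mulrAC; apply: norm_div_le => //; last by rewrite distrC rnorm_lipschitz.
rewrite -[X in X <= _](sqr_sqrtr (ltW e_gt0)) expr2.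
by rewrite ler_pM ?sqrt_le_rnorm // ltW // sqrt_e_gt0.
Qed.

Lemma bounded_lipschitz_aff_div_rnorm k :
  bounded_lipschitz (fun t => aff t k / rnorm t) 1 (2 * abs_sum / Num.sqrt e).
Proof.
have bounded1 t : `|aff t k / rnorm t| <= 1.
  by rewrite -[1](divff (rnorm_neq0 t)) norm_div_le ?rnorm_gt0 ?abs_aff_le_rnorm.
split=> [//|y z].
have -> : aff y k / rnorm y - aff z k / rnorm z =
   (aff y k - aff z k) / rnorm y + (aff z k / rnorm z) * (rnorm z - rnorm y) / rnorm y.
  by field; rewrite !rnorm_neq0.
have -> : 2 * abs_sum / Num.sqrt e * `|y - z| =
    abs_sum * `|y - z| / Num.sqrt e + abs_sum * `|y - z| / Num.sqrt e by ring.
apply: le_trans (ler_normD _ _) _.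
apply: lerD; apply: norm_div_le; rewrite ?sqrt_e_gt0 ?sqrt_le_rnorm //.
  by apply: le_trans (aff_lipschitz y z k) _; rewrite ler_wpM2r ?row_abs_sum_le.
rewrite normrM -[leRHS]mul1r ler_pM // distrC; exact: rnorm_lipschitz.
Qed.

Definition rnorm_grad_lip : R := abs_sum * (2 * abs_sum / Num.sqrt e).

Lemma rnorm_grad_lip_ge0 : 0 <= rnorm_grad_lip.
Proof. by rewrite !mulr_ge0 ?abs_sum_ge0 // invr_ge0 ltW // sqrt_e_gt0. Qed.

Lemma bounded_lipschitz_tr_aff_div_rnorm i :
  bounded_lipschitz (fun t => tr_aff t i / rnorm t) abs_sum rnorm_grad_lip.
Proof.
have -> : (fun t => tr_aff t i / rnorm t) = fun t => \sum_k A k i * (aff t k / rnorm t).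
  by apply/funext => t; rewrite /tr_aff mulr_suml; apply: eq_bigr => k _; rewrite mulrA.
apply: (bounded_lipschitz_le (bounded_lipschitz_sum (fun k =>
  bounded_lipschitz_mul (bounded_lipschitz_cst (A k i)) (bounded_lipschitz_aff_div_rnorm k)))).
  by apply: le_trans (col_abs_sum_le i); apply: ler_sum => k _; rewrite mulr1.
under eq_bigr do rewrite mulr0 addr0.
rewrite -mulr_suml ler_wpM2r ?col_abs_sum_le //.
by rewrite !mulr_ge0 ?abs_sum_ge0 // invr_ge0 ltW // sqrt_e_gt0.
Qed.

Lemma hess_locally_lipschitz_scaled_rnorm u :
  hess_locally_lipschitz (fun t => (u * rnorm t : R^o)).
Proof.
pose entry i j := bounded_lipschitz_mul (bounded_lipschitz_cst u)
  (bounded_lipschitz_add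
    (bounded_lipschitz_mul
      (bounded_lipschitz_le (bounded_lipschitz_cst (gram i j)) (gram_le i j) (lexx 0))
      bounded_lipschitz_inv_rnorm)
    (bounded_lipschitz_opp (bounded_lipschitz_mul
      (bounded_lipschitz_mul (bounded_lipschitz_tr_aff_div_rnorm i)
                             (bounded_lipschitz_tr_aff_div_rnorm j))
      bounded_lipschitz_inv_rnorm))).
(* The Hessian is globally Lipschitz, so any radius will do. *)
move=> x; exists 1; split=> //.
match type of entry with forall _ _, bounded_lipschitz _ _ ?K => exists `|K| end.
move=> y z _ _; apply: mx_norm_le => [|i j]; first by rewrite mulr_ge0.
rewrite !hess_scaled_rnorm !mxE.
apply: le_trans ((entry i j).2 y z) _.
by rewrite ler_wpM2r ?real_ler_norm ?num_real.
Qed.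

(* Cauchy-Schwarz for the vectors (A x + c, sqrt e) and (A y + c, sqrt e). *)
Lemma aff_inner_le_rnorm_mul x y : \sum_k aff x k * aff y k + e <= rnorm x * rnorm y.
Proof.
have := cauchy_schwarz_cons (Num.sqrt e) (Num.sqrt e)
  (sumr_ge0 _ (fun k _ => sqr_ge0 (aff x k))) (sumr_ge0 _ (fun k _ => sqr_ge0 (aff y k)))
  (cauchy_schwarz (aff x) (aff y)).
rewrite -expr2 sqr_sqrtr ?(ltW e_gt0) // -/(rnorm2 x) -/(rnorm2 y) -!rnorm_sqr -exprMn => cs.
apply: le_trans (ler_norm _) _.
have xy0 : 0 <= rnorm x * rnorm y by rewrite mulr_ge0 // ltW // rnorm_gt0.
by rewrite -sqrtr_sqr -(ger0_norm xy0) -sqrtr_sqr ler_wsqrtr.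
Qed.

Lemma rnorm_convex : convex_fun rnorm.
Proof.
move=> x y t t0 t1; have cs := aff_inner_le_rnorm_mul x y.
set s := 1 - t; have s0 : 0 <= s by rewrite subr_ge0.
set z := t *: x + s *: y.
have aff_z k : aff z k = t * aff x k + s * aff y k.
  rewrite /aff; have -> : \sum_j A k j * z j 0 =
      t * \sum_j A k j * x j 0 + s * \sum_j A k j * y j 0.
    rewrite !mulr_sumr -big_split; apply: eq_bigr => j _; rewrite /z !mxE /=; ring.
  rewrite /s; ring.
set Sx := \sum_k aff x k ^+ 2; set Sy := \sum_k aff y k ^+ 2.
set Sxy := \sum_k aff x k * aff y k.
have rnorm2_z : rnorm2 z = t ^+ 2 * Sx + s ^+ 2 * Sy + 2 * t * s * Sxy + e.
  rewrite /rnorm2; congr (_ + _); rewrite /Sx /Sy /Sxy !mulr_sumr -!big_split.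
  by apply: eq_bigr => k _; rewrite aff_z /=; ring.
have rx : rnorm x ^+ 2 = Sx + e by rewrite rnorm_sqr.
have ry : rnorm y ^+ 2 = Sy + e by rewrite rnorm_sqr.
have rhs0 : 0 <= t * rnorm x + s * rnorm y by rewrite addr_ge0 // mulr_ge0 // ltW // rnorm_gt0.
rewrite /rnorm -/(rnorm x) -/(rnorm y) -(ger0_norm rhs0) -sqrtr_sqr ler_wsqrtr //.
rewrite rnorm2_z -subr_ge0.
have -> : (t * rnorm x + s * rnorm y) ^+ 2 - (t ^+ 2 * Sx + s ^+ 2 * Sy + 2 * t * s * Sxy + e) =
  2 * (t * s * (rnorm x * rnorm y - Sxy - e)) + e * ((t + s) ^+ 2 - 1).
  by rewrite sqrrD !exprMn rx ry; ring.
have -> : t + s = 1 by rewrite /s addrC subrK.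
have gap : 0 <= rnorm x * rnorm y - Sxy - e by rewrite /Sxy; lra.
by rewrite expr1n subrr mulr0 addr0 !mulr_ge0.
Qed.

Lemma scaled_rnorm_grad_lipschitz u y z :
  eucl_norm (u *: rnorm_grad y - u *: rnorm_grad z) <=
    n%:R * `|u| * rnorm_grad_lip * eucl_norm (y - z).
Proof.
rewrite -2!mulrA; apply: eucl_norm_le_entries => i.
rewrite !mxE -mulrBr normrM ler_wpM2l //.
apply: le_trans ((bounded_lipschitz_tr_aff_div_rnorm i).2 y z) _.
by rewrite ler_wpM2l ?rnorm_grad_lip_ge0 ?mx_norm_le_eucl_norm.
Qed.

Lemma convex_scaled_rnorm_add_sqr u L : 0 <= u -> 0 <= L ->
  convex_fun (fun x : V => u * rnorm x + L / 2 * eucl_norm x ^+ 2).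
Proof.
move=> u0 L0 x y t t0 t1; set s := 1 - t; have s0 : 0 <= s by rewrite subr_ge0.
have scaled : u * rnorm (t *: x + s *: y) <= u * (t * rnorm x + s * rnorm y).
  by rewrite ler_wpM2l // rnorm_convex.
have sqr : eucl_norm (t *: x + s *: y) ^+ 2 <= t * eucl_norm x ^+ 2 + s * eucl_norm y ^+ 2.
  rewrite !eucl_norm_sqr !mulr_sumr -big_split; apply: ler_sum => j _; rewrite !mxE -subr_ge0.
  have -> : t * x j 0 ^+ 2 + s * y j 0 ^+ 2 - (t * x j 0 + s * y j 0) ^+ 2 =
    t * s * (x j 0 - y j 0) ^+ 2 by rewrite /s; ring.
  by rewrite mulr_ge0 ?sqr_ge0 // mulr_ge0.
have := lerD scaled (ler_wpM2l (divr_ge0 L0 (ler0n _ 2)) sqr).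
by move/le_trans; apply; rewrite le_eqVlt; apply/orP; left; apply/eqP; ring.
Qed.

Lemma curvature_bounded_scaled_rnorm u L : 0 <= u -> n%:R * u * rnorm_grad_lip <= L ->
  curvature_bounded L (fun t => (u * rnorm t : R^o)).
Proof.
move=> u0 uL; have L0 : 0 <= L.
  by apply: le_trans uL; rewrite mulr_ge0 ?rnorm_grad_lip_ge0 // mulr_ge0 ?ler0n.
split; first exact: convex_scaled_rnorm_add_sqr.
move=> x y; rewrite grad_scaled_rnorm.
apply: le_trans (scaled_rnorm_grad_lipschitz u x y) _.
by rewrite ger0_norm // ler_wpM2r // sqrtr_ge0.
Qed.

Lemma twice_differentiable_scaled_rnorm u :
  twice_differentiable (fun t => (u * rnorm t : R^o)).
Proof.
split=> x; first exact: (differentiableM (differentiable_cst _ _) (differentiable_rnorm _)).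
by rewrite grad_scaled_rnorm; exact: differentiableZ (differentiable_rnorm_grad x).
Qed.

Lemma is_derive_grad_scaled_rnorm (t : V) (u : R) :
  is_derive u 1 (fun v : R => grad (fun t' => (v * rnorm t' : R^o)) t) (rnorm_grad t).
Proof.
have -> : (fun v : R => grad (fun t' => (v * rnorm t' : R^o)) t) = fun v => v *: rnorm_grad t.
  by apply/funext => v; rewrite grad_scaled_rnorm.
have d_scale := @is_diff_scalel R _ u (rnorm_grad t).
apply: DeriveDef; first exact/diff_derivable/ex_diff.
by rewrite deriveE ?diff_val ?scale1r //; exact: ex_diff.
Qed.

Lemma eucl_norm_rnorm_grad_le t : eucl_norm (rnorm_grad t) <= n%:R * abs_sum.
Proof.
apply: eucl_norm_le_entries => i; rewrite mxE.
exact: (bounded_lipschitz_tr_aff_div_rnorm i).1.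
Qed.

End RegularizedNorm.

Lemma cable_bE (R : realType) n (Xa Xb : 'M[R]_(3, n)) ta tb eps th u :
  cable_b Xa Xb ta tb eps th u = u * rnorm (Xa - Xb) (ta - tb) eps th.
Proof.
rewrite /cable_b /rnorm /rnorm2 eucl_norm_sqr; congr (_ * Num.sqrt (_ + _)).
apply: eq_bigr => k _; congr (_ ^+ 2); rewrite /aff !mxE.
have -> : \sum_j (Xa - Xb) k j * th j 0 = \sum_j Xa k j * th j 0 - \sum_j Xb k j * th j 0.
  by rewrite -sumrB; apply: eq_bigr => j _; rewrite !mxE mulrBl.
ring.
Qed.

Lemma compact_has_ub (R : realType) (X : set R) :
  compact X -> exists U, forall u, X u -> u <= U.
Proof.
case/compact_bounded => M [_ XM]; exists (M + 1) => u Xu.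
have M_lt : M < M + 1 by rewrite ltrDl.
exact: le_trans (ler_norm u) (XM _ M_lt u Xu).
Qed.

Theorem corollary9 (R : realType) (n : nat) (X : set R)
    (Xa Xb : 'M[R]_(3, n)) (ta tb : 'cV[R]_3) (eps : R) :
  X !=set0 -> compact X -> convex_subset X -> X `<=` [set x | 0 <= x] ->
  0 < eps ->
  (exists L : R,
    forall u, X u ->
      twice_differentiable (fun th => (cable_b Xa Xb ta tb eps th u : R^o)) /\
      hess_locally_lipschitz (fun th => (cable_b Xa Xb ta tb eps th u : R^o)) /\
      curvature_bounded L (fun th => (cable_b Xa Xb ta tb eps th u : R^o))) /\
  (exists M : R,
    forall (th : 'cV[R]_n) (u : R), X u ->
      exists d : 'cV[R]_n,
        is_derive u 1
          (fun v : R => grad (fun th' => (cable_b Xa Xb ta tb eps th' v : R^o)) th) d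
        /\ eucl_norm d <= M).
Proof.
move=> [u0 Xu0] /compact_has_ub[U XU] _ X_ge0 eps_gt0.
have U_ge0 : 0 <= U := le_trans (X_ge0 _ Xu0) (XU _ Xu0).
have b_scaled u : (fun th => (cable_b Xa Xb ta tb eps th u : R^o)) =
    (fun th => (u * rnorm (Xa - Xb) (ta - tb) eps th : R^o)).
  by apply/funext => th; rewrite cable_bE.
split.
  exists (n%:R * U * rnorm_grad_lip (Xa - Xb) eps) => u Xu; rewrite b_scaled.
  split; first exact: twice_differentiable_scaled_rnorm.
  split; first exact: hess_locally_lipschitz_scaled_rnorm.
  apply: curvature_bounded_scaled_rnorm => //; first exact: X_ge0.
  by rewrite ler_wpM2r ?rnorm_grad_lip_ge0 // ler_wpM2l // XU.
exists (n%:R * abs_sum (Xa - Xb)) => th u _.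
exists (rnorm_grad (Xa - Xb) (ta - tb) eps th); split.
  under eq_fun do rewrite b_scaled.
  exact: is_derive_grad_scaled_rnorm.
exact: eucl_norm_rnorm_grad_le.
Qed.
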